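(* Fix an integer $r\ge2$ and two residues $s,k$ modulo $r$. Every $\mathscr C_{sk}^{(r)}$-hom-free $r$-graph is also $\mathscr C_k^{(r)}$-hom-free.
   Context: An $r$-graph is an $r$-uniform hypergraph. For $\ell>r$, the tight cycle $C_\ell^{(r)}$ has vertices $v_1,\dots,v_\ell$ and edges $\{v_i,\dots,v_{i+r-1}\}$, $1\le i\le\ell$ (indices mod $\ell$). A homomorphism $F\to G$ maps $V(F)\to V(G)$ sending each edge onto an edge. For a residue $j$ mod $r$, an $r$-graph is $\mathscr C_j^{(r)}$-hom-free if there is no homomorphism $C_\ell^{(r)}\to G$ for any $\ell>r$ with $\ell\equiv j\pmod r$. *)

From mathcomp Require Import all_boot.
Set Implicit Arguments. Unset Strict Implicit. Unset Printing Implicit Defensive.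

Definition uniform (V : finType) (r : nat) (E : {set {set V}}) : Prop :=
  forall e, e \in E -> #|e| = r.

(* A homomorphism from the tight cycle C_l^(r) (vertices v_0..v_{l-1}, edges
   {v_i,...,v_{i+r-1}} indices mod l) into (V,E), given as a vertex map
   f : nat -> V read on indices modulo l: the image of every edge is an edge. *)
Definition tight_cycle_hom (V : finType) (E : {set {set V}}) (r l : nat)
    (f : nat -> V) : Prop :=
  forall i, i < l -> [set f ((i + j) %% l) | j : 'I_r] \in E.

Definition hom_free (V : finType) (E : {set {set V}}) (r j : nat) : Prop :=
  forall (l : nat) (f : nat -> V), r < l -> l = j %[mod r] ->
    ~ tight_cycle_hom E r l f.

From mathcomp Require Import all_boot.

(* Winding a tight cycle C_l^(r) m times around itself is a homomorphism
   C_(m l)^(r) -> C_l^(r), so a homomorphic image of C_l^(r) is also one of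
   C_(m l)^(r).  Taking m = s + r gives m l > r and m l = s k (mod r) whenever
   l = k (mod r). *)

Lemma tight_cycle_hom_wind (V : finType) (E : {set {set V}}) (r l m : nat)
    (f : nat -> V) :
  tight_cycle_hom E r l f -> tight_cycle_hom E r (m * l) (fun n => f (n %% l)).
Proof.
move=> hom_f i lt_i_ml.
have l_gt0 : 0 < l.
  by rewrite lt0n; apply: contraTneq lt_i_ml => ->; rewrite muln0.
have -> : [set f ((i + j) %% (m * l) %% l) | j : 'I_r]
        = [set f ((i %% l + j) %% l) | j : 'I_r].
  by apply: eq_imset => j; rewrite modn_dvdm ?dvdn_mull // modnDml.
by apply: hom_f; rewrite ltn_pmod.
Qed.

Lemma hom_free_of_mul (V : finType) (E : {set {set V}}) (r s k : nat) :
  0 < r -> hom_free E r (s * k) -> hom_free E r k.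
Proof.
move=> r_gt0 free_sk l f lt_rl eq_lk hom_f.
apply: (free_sk _ _ _ _ (@tight_cycle_hom_wind _ _ _ _ (s + r) _ hom_f)).
- by apply: leq_trans lt_rl _; rewrite leq_pmull // ltn_addl.
- by rewrite mulnDl addnC (mulnC r) modnMDl -modnMmr eq_lk modnMmr.
Qed.

Theorem proposition3p10 (r s k : nat) (V : finType) (E : {set {set V}}) :
  2 <= r -> uniform r E -> hom_free E r (s * k) -> hom_free E r k.
Proof.
move=> r_ge2 _; apply: hom_free_of_mul.
exact: leq_trans r_ge2.
Qed.
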